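(* Let $(X,\{\tau_n:n<\omega\})$ be a GLP-space in which the topologies are $T_3$, and let $n<\omega$. For any $A,B\subseteq X$: $A\vdash_n B$ if and only if $c_n(A)\subseteq c_n(B)$ or $B\not\subseteq d_n(X)$.
   Context: For a topology $\tau_n$ on $X$, $d_n(A)$ denotes the set of limit points of $A\subseteq X$ (the derivative) and $c_n(A)$ the closure of $A$ with respect to $\tau_n$. A GLP-space is a nonempty set $X$ with topologies $\tau_n$, $n<\omega$, such that the powerset boolean algebra $({\mathcal P}(X),\{d_n\})$ is a GLP-algebra, i.e. for all $n$, all $m<n$ and all $x,y\subseteq X$: $d_n(x\cup y)=d_n(x)\cup d_n(y)$; $d_n(\emptyset)=\emptyset$; $d_n(x)=d_n(x\setminus d_n(x))$; $d_n(x)\subseteq d_m(x)$; $d_m(x)\subseteq X\setminus d_n(X\setminus d_m(x))$. For $A,B\subseteq X$, $A\vdash_n B$ means: for every $Z\subseteq X$, if $B\subseteq d_n(Z)$ then $A\subseteq d_n(Z)$. *)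

From Stdlib Require Import Classical.
Set Implicit Arguments.

Definition subset {X : Type} (A B : X -> Prop) : Prop := forall x, A x -> B x.
Definition set_eq {X : Type} (A B : X -> Prop) : Prop := forall x, A x <-> B x.
Definition setU {X : Type} (A B : X -> Prop) : X -> Prop := fun x => A x \/ B x.
Definition setD {X : Type} (A B : X -> Prop) : X -> Prop := fun x => A x /\ ~ B x.
Definition setC {X : Type} (A : X -> Prop) : X -> Prop := fun x => ~ A x.
Definition setT {X : Type} : X -> Prop := fun _ => True.
Definition set0 {X : Type} : X -> Prop := fun _ => False.

Record topology (X : Type) := Topology {
  open : (X -> Prop) -> Prop;
  open_full : open (fun _ => True);
  open_inter : forall U V, open U -> open V -> open (fun x => U x /\ V x);
  open_union : forall F : (X -> Prop) -> Prop,
      (forall U, F U -> open U) -> open (fun x => exists U, F U /\ U x)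
}.

Definition closed {X : Type} (t : topology X) (F : X -> Prop) : Prop :=
  open t (setC F).

Definition deriv {X : Type} (t : topology X) (A : X -> Prop) : X -> Prop :=
  fun x => forall U, open t U -> U x -> exists y, U y /\ y <> x /\ A y.

Definition closure {X : Type} (t : topology X) (A : X -> Prop) : X -> Prop :=
  fun x => forall U, open t U -> U x -> exists y, U y /\ A y.

Definition T1 {X : Type} (t : topology X) : Prop :=
  forall x : X, closed t (fun y => y = x).

Definition regular {X : Type} (t : topology X) : Prop :=
  forall (F : X -> Prop) (x : X), closed t F -> ~ F x ->
    exists U V, open t U /\ open t V /\ U x /\ subset F V /\
                (forall y, U y -> V y -> False).

Definition T3 {X : Type} (t : topology X) : Prop := T1 t /\ regular t.

Definition GLP_algebra {X : Type} (d : nat -> (X -> Prop) -> (X -> Prop)) : Prop :=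
  forall n (x y : X -> Prop),
    set_eq (d n (setU x y)) (setU (d n x) (d n y)) /\
    set_eq (d n set0) set0 /\
    set_eq (d n x) (d n (setD x (d n x))) /\
    (forall m, m < n ->
       subset (d n x) (d m x) /\
       subset (d m x) (setC (d n (setC (d m x))))).

Definition GLP_space {X : Type} (tau : nat -> topology X) : Prop :=
  (exists x : X, True) /\ GLP_algebra (fun n => deriv (tau n)).

Definition vdash {X : Type} (tau : nat -> topology X) (n : nat) (A B : X -> Prop) : Prop :=
  forall Z : X -> Prop, subset B (deriv (tau n) Z) -> subset A (deriv (tau n) Z).

(* Only the topology [tau n] matters, and only through T3.  If [B] lies in the
   derived set of the whole space then, for every point [a] outside the closure
   of [B], regularity gives an open [V] containing that closure and a
   neighbourhood of [a] missing [V]; every point of [B] is then a limit point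
   of [V], while [a] is not, so [A |-_n B] forces [A] into the closure of [B].
   Conversely, in a T1 space derived sets are closed, so [c(A) <= c(B)] lets
   [B <= d(Z)] propagate to [A]; and if some point of [B] is isolated then no
   [d(Z)] contains [B], so the entailment holds vacuously. *)

From Stdlib Require Import Classical FunctionalExtensionality PropExtensionality.
Set Implicit Arguments.

Section Topology.

Variables (X : Type) (t : topology X).

Lemma open_ext (U V : X -> Prop) :
  open t U -> (forall x, U x <-> V x) -> open t V.
Proof.
  intros HU HUV.
  replace V with U; [exact HU |].
  apply functional_extensionality; intros x.
  apply propositional_extensionality, HUV.
Qed.

Lemma subset_closure {A : X -> Prop} : subset A (closure t A).
Proof. intros a Aa U _ Ua; exists a; split; assumption. Qed.

Lemma closure_sub_closure {A B : X -> Prop} :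
  subset A (closure t B) -> subset (closure t A) (closure t B).
Proof.
  intros HAB x Hx U HU Ux.
  destruct (Hx U HU Ux) as [a [Ua Aa]].
  exact (HAB a Aa U HU Ua).
Qed.

(* The complement of [closure t B] is the union of the open sets missing [B]. *)
Lemma closed_closure (B : X -> Prop) : closed t (closure t B).
Proof.
  set (F := fun U => open t U /\ forall y, U y -> ~ B y).
  eapply open_ext; [exact (open_union t F (fun U HU => proj1 HU)) |].
  intros x; unfold setC, closure; split.
  - intros [U [[HU HUB] Ux]] Hx.
    destruct (Hx U HU Ux) as [y [Uy By]].
    exact (HUB y Uy By).
  - intros Hx.
    apply not_all_ex_not in Hx as [U HU].
    apply imply_to_and in HU as [HUo HU].
    apply imply_to_and in HU as [Ux HU].
    exists U; repeat split; try assumption.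
    intros y Uy By; apply HU; exists y; split; assumption.
Qed.

Lemma deriv_monotone {Y Z : X -> Prop} :
  subset Y Z -> subset (deriv t Y) (deriv t Z).
Proof.
  intros HYZ x Hx U HU Ux.
  destruct (Hx U HU Ux) as [y [Uy [yx Yy]]].
  exists y; repeat split; auto.
Qed.

Lemma deriv_setT_open {V : X -> Prop} {x : X} :
  open t V -> V x -> deriv t setT x -> deriv t V x.
Proof.
  intros HV Vx Hx U HU Ux.
  destruct (Hx _ (open_inter t U V HU HV) (conj Ux Vx)) as [y [[Uy Vy] [yx _]]].
  exists y; repeat split; assumption.
Qed.

Lemma closure_deriv {Z : X -> Prop} :
  T1 t -> subset (closure t (deriv t Z)) (deriv t Z).
Proof.
  intros HT1 x Hx U HU Ux.
  destruct (Hx U HU Ux) as [y [Uy Hy]].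
  destruct (classic (y = x)) as [-> | yx].
  - exact (Hy U HU Uy).
  - assert (HUx : open t (fun w => U w /\ ~ w = x)) by exact (open_inter t _ _ HU (HT1 x)).
    destruct (Hy _ HUx (conj Uy yx)) as [z [[Uz zx] [_ Zz]]].
    exists z; repeat split; assumption.
Qed.

Theorem entails_iff_closure_sub (A B : X -> Prop) :
  T3 t ->
  (forall Z, subset B (deriv t Z) -> subset A (deriv t Z)) <->
  (subset (closure t A) (closure t B) \/ ~ subset B (deriv t setT)).
Proof.
  intros [HT1 Hreg]; split.
  - intros Hent.
    destruct (classic (subset B (deriv t setT))) as [HB | HB]; [left | right; exact HB].
    apply closure_sub_closure; intros a Aa.
    apply NNPP; intros Ha.
    destruct (Hreg _ a (closed_closure B) Ha) as [U [V [HU [HV [Ua [HBV Hdis]]]]]].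
    assert (HBdV : subset B (deriv t V)).
    { intros b Bb.
      exact (deriv_setT_open HV (HBV b (subset_closure b Bb)) (HB b Bb)). }
    destruct (Hent V HBdV a Aa U HU Ua) as [y [Uy [_ Vy]]].
    exact (Hdis y Uy Vy).
  - intros [HAB | HB] Z HBZ.
    + intros a Aa; apply (closure_deriv HT1).
      apply (closure_sub_closure (fun b Bb => subset_closure _ (HBZ b Bb))).
      exact (HAB a (subset_closure a Aa)).
    + exfalso; apply HB; intros b Bb.
      exact (deriv_monotone (fun _ _ => I) (HBZ b Bb)).
Qed.

End Topology.

Theorem mainTheorem5 (X : Type) (tau : nat -> topology X)
  (Hglp : GLP_space tau) (HT3 : forall k, T3 (tau k)) (n : nat)
  (A B : X -> Prop) :
  vdash tau n A B <->
  (subset (closure (tau n) A) (closure (tau n) B) \/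
   ~ subset B (deriv (tau n) setT)).
Proof. exact (entails_iff_closure_sub A B (HT3 n)). Qed.
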